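(* Let $n\ge2$, $k\ge2$ and $1\le i\le k-1$. Let $Q$ be the graph with vertex set $\mathbb{Z}_n^i$ in which two distinct words $\boldsymbol\alpha,\boldsymbol\beta\in\mathbb{Z}_n^i$ are adjacent if and only if some vertex of $H_{n,k}$ with prefix $\boldsymbol\alpha$ (first $i$ coordinates equal to $\boldsymbol\alpha$) is adjacent in $H_{n,k}$ to some vertex with prefix $\boldsymbol\beta$. Then $Q$ is equal to (in particular isomorphic to) $H_{n,i}$, i.e., contracting each of the $n^i$ blocks of vertices with a common prefix of length $i$ to a single vertex (and merging multiple edges) yields $H_{n,i}$.
   Context: Let $n\ge 2$ and $k\ge 1$ be integers. $H_{n,k}$ is the simple undirected graph with vertex set $V_{n,k}=\mathbb{Z}_n^k$ (so $|V_{n,k}|=n^k$), whose vertices are written as strings $x_1x_2\ldots x_k$ with $x_j\in\mathbb{Z}_n=\{0,1,\ldots,n-1\}$. Two distinct vertices are adjacent if and only if they are related by one of the following rules. For $i=0$ the prefix $x_1\ldots x_i$ is empty, and ''$0\ldots0$'' denotes a string of zeros completing the word to length $k$. (R1) $x_1\ldots x_{k-1}x_k\sim x_1\ldots x_{k-1}y_k$ whenever $y_k\neq x_k$. (R2) For $0\le i\le k-2$: $x_1\ldots x_i0\ldots0\sim x_1\ldots x_ix_{i+1}\ldots x_k$ whenever $x_j\neq 0$ for all $i+1\le j\le k$. (R3) For $1\le i\le k-1$: $x_1\ldots x_{i-1}x_i0\ldots0\sim x_1\ldots x_{i-1}y_i0\ldots0$ whenever $x_i,y_i\neq0$ and $x_i\ne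 y_i$. In particular, $H_{n,1}$ is the complete graph $K_n$. *)

From mathcomp Require Import all_boot.
Set Implicit Arguments. Unset Strict Implicit. Unset Printing Implicit Defensive.

(* The rules below are stated on
   the underlying lists of natural numbers (map val), letters indexed from 0. *)

Definition all_zero (s : seq nat) : bool := all (fun a => a == 0) s.
Definition all_nz (s : seq nat) : bool := all (fun a => a != 0) s.

Definition R1 (k : nat) (x y : seq nat) : bool :=
  (take k.-1 x == take k.-1 y) && (x != y).

Definition R2 (k : nat) (x y : seq nat) : bool :=
  [exists i : 'I_k.-1,
     [&& take i x == take i y, all_zero (drop i x) & all_nz (drop i y)]].

(* (R3): x = x_1..x_{i-1} x_i 0..0, y = x_1..x_{i-1} y_i 0..0 with x_i, y_i
   nonzero and distinct, for some 1 <= i <= k-1 (j = i-1 ranges in 0..k-2) *)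
Definition R3 (k : nat) (x y : seq nat) : bool :=
  [exists j : 'I_k.-1,
     [&& take j x == take j y,
         all_zero (drop j.+1 x), all_zero (drop j.+1 y),
         nth 0 x j != 0, nth 0 y j != 0 & nth 0 x j != nth 0 y j]].

Definition Hadj (n k : nat) (x y : k.-tuple 'I_n) : bool :=
  let x' := map val x in let y' := map val y in
  (x != y) && [|| R1 k x' y', R1 k y' x', R2 k x' y', R2 k y' x',
                  R3 k x' y' | R3 k y' x'].

Definition Qadj (n k i : nat) (al be : i.-tuple 'I_n) : bool :=
  (al != be) &&
  [exists x : k.-tuple 'I_n, exists y : k.-tuple 'I_n,
     [&& take i x == al :> seq 'I_n, take i y == be :> seq 'I_n & Hadj x y]].

From mathcomp Require Import all_boot.
From mathcomp Require Import zify.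

Set Implicit Arguments.
Unset Strict Implicit.
Unset Printing Implicit Defensive.

(* Forgetting the last k - i letters maps every rule of H_{n,k} between two
   words with distinct prefixes to a rule of H_{n,i} between the prefixes
   (if the common prefix of the rule has length at least i - 1, the two
   prefixes differ only in their last letter, an instance of R1).
   Conversely, a rule of H_{n,i} between a and b lifts to H_{n,k} by padding
   with a constant letter 0 or 1: R2 and R3 lift with 0^(k-i) and 1^(k-i)
   resp. 0^(k-i) on both sides, and R1, which changes the last letter of the
   prefix, lifts to R2 (one of the two last letters is 0) or to R3 (both are
   nonzero). *)

Definition Hrule (k : nat) (x y : seq nat) : bool :=
  [|| R1 k x y, R2 k x y | R3 k x y].

Definition Hrel (k : nat) (x y : seq nat) : bool := Hrule k x y || Hrule k y x.

Lemma HadjE (n k : nat) (x y : k.-tuple 'I_n) :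
  Hadj x y = (x != y) && Hrel k (map val x) (map val y).
Proof.
rewrite /Hadj /Hrel /Hrule; congr (_ && _).
by case: (R1 k _ _); case: (R1 k _ _); case: (R2 k _ _);
   case: (R2 k _ _); case: (R3 k _ _); case: (R3 k _ _).
Qed.

Lemma all_drop_take (p : pred nat) (m i : nat) (s : seq nat) :
  all p (drop m s) -> all p (drop m (take i s)).
Proof.
case: (leqP m i) => hm.
  rewrite -(subnK hm) -take_drop => /allP H.
  by apply/allP => z /mem_take; apply: H.
by move=> _; rewrite drop_oversize // size_take_min geq_min ltnW.
Qed.

Lemma dropl_cat (m : nat) (s1 s2 : seq nat) :
  m <= size s1 -> drop m (s1 ++ s2) = drop m s1 ++ s2.
Proof.
elim: s1 m => [|a s1 IHs] [|m] //=; first by rewrite drop0.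
by move/IHs.
Qed.

Lemma R1_take (i j : nat) (x y : seq nat) : i.-1 <= j -> take j x = take j y ->
  take i x != take i y -> R1 i (take i x) (take i y).
Proof.
move=> hj hxy hne; rewrite /R1 hne andbT !take_takel ?leq_pred //.
by rewrite -(take_takel _ hj) hxy take_takel.
Qed.

Lemma Hrule_take (k i : nat) (x y : seq nat) : i <= k ->
  take i x != take i y -> Hrule k x y -> Hrule i (take i x) (take i y).
Proof.
move=> hik hne; case/or3P.
- case/andP=> /eqP hxy _; rewrite /Hrule (@R1_take i k.-1) //; lia.
- case/existsP=> j /and3P [/eqP hj hz hnz].
  case: (leqP i.-1 j) => hij; first by rewrite /Hrule (R1_take hij hj).
  apply/or3P/Or32/existsP; exists (Ordinal hij).
  have hji : j <= i by lia.
  rewrite /= !take_takel // hj eqxx /=.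
  by apply/andP; split; apply: all_drop_take.
- case/existsP=> j /and3P [/eqP hj hz /and4P [hz' hx hy hxy]].
  case: (leqP i.-1 j) => hij; first by rewrite /Hrule (R1_take hij hj).
  apply/or3P/Or33/existsP; exists (Ordinal hij).
  have hji : j < i by lia.
  rewrite /= !take_takel ?(ltnW hji) // hj eqxx !nth_take // hx hy hxy.
  by rewrite /= !andbT; apply/andP; split; apply: all_drop_take.
Qed.

Lemma Hrel_take (k i : nat) (x y : seq nat) : i <= k ->
  take i x != take i y -> Hrel k x y -> Hrel i (take i x) (take i y).
Proof.
move=> hik hne /orP [hxy|hyx]; first by rewrite /Hrel (Hrule_take hik).
by rewrite eq_sym in hne; rewrite /Hrel (Hrule_take hik hne) ?orbT.
Qed.

Section Padding.

Variables (k i : nat) (a b : seq nat).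
Hypotheses (size_a : size a = i) (size_b : size b = i) (lt_ik : i < k).

Lemma R2_pad (j : nat) : j < i -> take j a = take j b ->
  all_zero (drop j a) -> all_nz (drop j b) ->
  R2 k (a ++ nseq (k - i) 0) (b ++ nseq (k - i) 1).
Proof.
move=> hji hab hz hnz; have hjk : j < k.-1 by lia.
apply/existsP; exists (Ordinal hjk).
rewrite /= !takel_cat ?size_a ?size_b ?(ltnW hji) // hab eqxx.
rewrite !dropl_cat ?size_a ?size_b ?(ltnW hji) //.
move: hz hnz; rewrite /all_zero /all_nz !all_cat !all_nseq => -> ->.
by rewrite !orbT.
Qed.

Lemma R3_pad (j : nat) : j < i -> take j a = take j b ->
  all_zero (drop j.+1 a) -> all_zero (drop j.+1 b) ->
  nth 0 a j != 0 -> nth 0 b j != 0 -> nth 0 a j != nth 0 b j ->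
  R3 k (a ++ nseq (k - i) 0) (b ++ nseq (k - i) 0).
Proof.
move=> hji hab hza hzb ha hb hne; have hjk : j < k.-1 by lia.
apply/existsP; exists (Ordinal hjk).
rewrite /= !takel_cat ?size_a ?size_b ?(ltnW hji) // hab eqxx.
rewrite !dropl_cat ?size_a ?size_b // !nth_cat size_a size_b hji ha hb hne.
move: hza hzb; rewrite /all_zero !all_cat !all_nseq => -> ->.
by rewrite eqxx !orbT.
Qed.

End Padding.

Lemma R1_last (i : nat) (a b : seq nat) : size a = i -> size b = i -> 0 < i ->
  R1 i a b ->
  [/\ take i.-1 a = take i.-1 b, drop i.-1 a = [:: nth 0 a i.-1],
      drop i.-1 b = [:: nth 0 b i.-1] & nth 0 a i.-1 != nth 0 b i.-1].
Proof.
move=> size_a size_b hi /andP [/eqP hab hne].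
have last_drop (s : seq nat) : size s = i -> drop i.-1 s = [:: nth 0 s i.-1].
  by move=> hs; rewrite (drop_nth 0) ?hs ?prednK ?drop_oversize ?hs //; lia.
rewrite hab !last_drop //; split=> //.
apply: contra hne => /eqP e; apply/eqP.
by rewrite -(cat_take_drop i.-1 a) -(cat_take_drop i.-1 b) !last_drop // hab e.
Qed.

Lemma Hrule_pad (k i : nat) (a b : seq nat) :
  size a = i -> size b = i -> 0 < i < k -> Hrule i a b ->
  exists u v : bool,
    Hrel k (a ++ nseq (k - i) (nat_of_bool u))
           (b ++ nseq (k - i) (nat_of_bool v)).
Proof.
move=> size_a size_b /andP [hi hik]; case/or3P.
- case/(R1_last size_a size_b hi) => hab da db hne.
  have hl : i.-1 < i by lia.
  case: (eqVneq (nth 0 a i.-1) 0) => ha; case: (eqVneq (nth 0 b i.-1) 0) => hb.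
  + by move: hne; rewrite ha hb.
  + exists false, true.
    rewrite /Hrel /Hrule (R2_pad size_a size_b hik hl hab) ?orbT //.
    * by rewrite da /all_zero /= ha.
    * by rewrite db /all_nz /= hb.
  + exists true, false.
    rewrite /Hrel /Hrule (R2_pad size_b size_a hik hl (esym hab)) ?orbT //.
    * by rewrite db /all_zero /= hb.
    * by rewrite da /all_nz /= ha.
  + exists false, false.
    rewrite /Hrel /Hrule (R3_pad size_a size_b hik hl hab) ?orbT //.
    * by rewrite drop_oversize // size_a prednK.
    * by rewrite drop_oversize // size_b prednK.
- case/existsP=> j /and3P [/eqP hab hz hnz]; exists false, true.
  rewrite /Hrel /Hrule (R2_pad size_a size_b hik _ hab) ?orbT //.
  by have := ltn_ord j; lia.
- case/existsP=> j /and3P [/eqP hab hza /and4P [hzb ha hb hne]].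
  exists false, false.
  rewrite /Hrel /Hrule (R3_pad size_a size_b hik _ hab) ?orbT //.
  by have := ltn_ord j; lia.
Qed.

Lemma Hrel_pad (k i : nat) (a b : seq nat) :
  size a = i -> size b = i -> 0 < i < k -> Hrel i a b ->
  exists u v : bool,
    Hrel k (a ++ nseq (k - i) (nat_of_bool u))
           (b ++ nseq (k - i) (nat_of_bool v)).
Proof.
move=> size_a size_b hik /orP [/(Hrule_pad size_a size_b hik) //|].
case/(Hrule_pad size_b size_a hik) => u [v hvu]; exists v, u.
by rewrite /Hrel orbC.
Qed.

Section PaddedTuples.

Variables (n k i : nat).
Hypotheses (lt1n : 1 < n) (le_ik : i <= k).

Definition letter (u : bool) : 'I_n :=
  if u then Ordinal lt1n else Ordinal (ltnW lt1n).

Lemma pad_tuple_size (t : i.-tuple 'I_n) (u : bool) :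
  size (t ++ nseq (k - i) (letter u)) == k.
Proof. by rewrite size_cat size_nseq size_tuple subnKC. Qed.

Definition pad (t : i.-tuple 'I_n) (u : bool) : k.-tuple 'I_n :=
  Tuple (pad_tuple_size t u).

Lemma take_pad (t : i.-tuple 'I_n) (u : bool) : take i (pad t u) = t.
Proof. by rewrite take_size_cat ?size_tuple. Qed.

Lemma map_val_pad (t : i.-tuple 'I_n) (u : bool) :
  map val (pad t u) = map val t ++ nseq (k - i) (nat_of_bool u).
Proof. by rewrite map_cat map_nseq; case: u. Qed.

End PaddedTuples.

Theorem mainTheorem3 (n k i : nat) :
  2 <= n -> 2 <= k -> 1 <= i -> i <= k.-1 ->
  forall al be : i.-tuple 'I_n, Qadj k al be = Hadj al be.
Proof.
move=> hn _ hi hik al be.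
have le_ik : i <= k by lia.
rewrite HadjE; apply/andP/andP => -[hne].
- case/existsP=> x /existsP [y /and3P [/eqP hx /eqP hy]].
  rewrite HadjE => /andP [_ hxy]; split=> //.
  have hne' : take i (map val x) != take i (map val y).
    rewrite -!map_take hx hy; apply: contra hne => /eqP.
    by move/(inj_map val_inj)/val_inj ->.
  by move: (Hrel_take le_ik hne' hxy); rewrite -!map_take hx hy.
- move=> hab; have size_val (t : i.-tuple 'I_n) : size (map val t) = i.
    by rewrite size_map size_tuple.
  have lt0ik : 0 < i < k by lia.
  have [u [v huv]] := Hrel_pad (size_val al) (size_val be) lt0ik hab.
  split=> //; apply/existsP; exists (pad hn le_ik al u).
  apply/existsP; exists (pad hn le_ik be v).
  rewrite !take_pad !eqxx HadjE !map_val_pad huv andbT /=.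
  apply: contra hne => /eqP /(congr1 (fun t : k.-tuple 'I_n => take i t)).
  by rewrite !take_pad => /val_inj ->.
Qed.
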